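(* Let $n\in\mathbb N$. For any $K\in\mathcal S_n\setminus\{\emptyset,\mathbb R^n\}$ we have \[ 2\le\mathrm{diam}(K)+\mathrm{diam}(K^c)\le 2\sqrt2. \] Moreover, if $\mathrm{diam}(K)=d$ then $2-d\le\mathrm{diam}(K^c)\le\sqrt{4-d^2}$.
   Context: $B(x,r)$ is the closed Euclidean ball. For $A\subseteq\mathbb R^n$, $A^c=\bigcap_{x\in A}B(x,1)$. $\mathcal S_n$ is the class of all sets of the form $\bigcap_{x\in A}B(x,1)$, $A\subseteq\mathbb R^n$ (including $\emptyset$ and $\mathbb R^n$). $\mathrm{diam}(A)=\sup\{\|x-y\|_2:x,y\in A\}$. *)

From HB Require Import structures.
From mathcomp Require Import all_boot all_order all_algebra.
From mathcomp Require Import classical_sets reals.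
Set Implicit Arguments. Unset Strict Implicit. Unset Printing Implicit Defensive.
Import Order.TTheory GRing.Theory Num.Theory.
Local Open Scope classical_set_scope.
Local Open Scope ring_scope.

Section Defs.
Variables (R : realType) (n : nat).

Definition enorm (x : 'rV[R]_n) : R := Num.sqrt (\sum_(i < n) x 0 i ^+ 2).

Definition cball (x : 'rV[R]_n) (r : R) : set 'rV[R]_n :=
  [set y | enorm (y - x) <= r].

(* A^c = intersection of the unit balls centred at points of A (R^n if A empty) *)
Definition bcomp (A : set 'rV[R]_n) : set 'rV[R]_n :=
  \bigcap_(x in A) cball x 1.

Definition in_Sn (K : set 'rV[R]_n) : Prop := exists A, K = bcomp A.

Definition diam (A : set 'rV[R]_n) : R :=
  sup [set d | exists x y, A x /\ A y /\ d = enorm (x - y)].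

End Defs.

(* Let L = K^c; since K is in S_n, also K = L^c.  For x1, x2 in K and y1, y2 in L
   the four cross distances are at most 1, so Euler's quadrilateral identity gives
   |x1 - x2|^2 + |y1 - y2|^2 <= 4, whence diam(K)^2 + diam(L)^2 <= 4; both upper
   bounds follow.  For the lower bound, the supremum of |y - x| over x in K, y in L
   is 1: were it s < 1, every y in L could be pushed by 1 - s along the ray from x
   and stay in L.  If d = diam K <= 1, pushing x in K by 1 - d away from y in L
   lands in L, so diam L >= |x - y| + 1 - d, whose supremum is 2 - d.  If instead
   diam L <= 1 the same argument applies with K and L exchanged. *)

From HB Require Import structures.
From mathcomp Require Import all_boot all_order all_algebra.
From mathcomp Require Import classical_sets reals.
From mathcomp Require Import ring lra.
Set Implicit Arguments. Unset Strict Implicit. Unset Printing Implicit Defensive.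
Import Order.TTheory GRing.Theory Num.Theory.
Local Open Scope classical_set_scope.
Local Open Scope ring_scope.

Lemma ler_sqrtr (R : rcfType) (a c : R) :
  0 <= a -> 0 <= c -> (a <= Num.sqrt c) = (a ^+ 2 <= c).
Proof. by move=> a0 c0; rewrite -ler_sqr ?nnegrE ?sqrtr_ge0 // sqr_sqrtr. Qed.

Section Euclidean.
Variables (R : realType) (n : nat).
Implicit Types (x y z : 'rV[R]_n) (a : R).

Definition dot x y : R := \sum_(i < n) x 0 i * y 0 i.

Lemma dot_ge0 x : 0 <= dot x x.
Proof. by apply: sumr_ge0 => i _; rewrite -expr2 sqr_ge0. Qed.

Lemma dotx0 x : dot x 0 = 0.
Proof. by rewrite /dot big1 // => i _; rewrite mxE mulr0. Qed.

Lemma dotC x y : dot x y = dot y x.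
Proof. by apply: eq_bigr => i _; rewrite mulrC. Qed.

Lemma enorm_ge0 x : 0 <= enorm x.
Proof. exact: sqrtr_ge0. Qed.

Lemma enorm_sqr x : enorm x ^+ 2 = dot x x.
Proof. exact/sqr_sqrtr/dot_ge0. Qed.

Lemma enorm_eq0 x : enorm x = 0 -> x = 0.
Proof.
move=> /eqP; rewrite sqrtr_eq0 => dle0.
have dxx0 : dot x x = 0 by apply/eqP; rewrite eq_le dle0 dot_ge0.
apply/rowP => i; rewrite mxE; apply/eqP; rewrite -sqrf_eq0; apply/eqP.
exact: (psumr_eq0P (fun j _ => sqr_ge0 (x 0 j)) dxx0).
Qed.

Lemma enormZ a x : enorm (a *: x) = `|a| * enorm x.
Proof.
rewrite /enorm -sqrtr_sqr -sqrtrM ?sqr_ge0 // mulr_sumr.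
by congr Num.sqrt; apply: eq_bigr => i _; rewrite mxE exprMn.
Qed.

Lemma enorm0 : enorm (0 : 'rV[R]_n) = 0.
Proof. by rewrite -(scale0r (0 : 'rV[R]_n)) enormZ normr0 mul0r. Qed.

Lemma distC x y : enorm (x - y) = enorm (y - x).
Proof. by rewrite -opprB -scaleN1r enormZ normrN1 mul1r. Qed.

Lemma enorm_sqrD x y :
  enorm (x + y) ^+ 2 = enorm x ^+ 2 + 2 * dot x y + enorm y ^+ 2.
Proof.
rewrite !enorm_sqr /dot mulr_sumr -!big_split /=.
by apply: eq_bigr => i _; rewrite mxE; ring.
Qed.

Lemma enorm_sqrZB a b x y :
  enorm (a *: x - b *: y) ^+ 2 =
  a ^+ 2 * enorm x ^+ 2 - 2 * a * b * dot x y + b ^+ 2 * enorm y ^+ 2.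
Proof.
rewrite !enorm_sqr /dot !mulr_sumr -sumrB -big_split /=.
by apply: eq_bigr => i _; rewrite !mxE; ring.
Qed.

Lemma cauchy_schwarz x y : dot x y <= enorm x * enorm y.
Proof.
have [x_eq0 | x_neq0] := eqVneq (enorm x) 0.
  by rewrite (enorm_eq0 x_eq0) dotC dotx0 enorm0 mul0r.
have [y_eq0 | y_neq0] := eqVneq (enorm y) 0.
  by rewrite (enorm_eq0 y_eq0) dotx0 enorm0 mulr0.
have xy_gt0 : 0 < enorm x * enorm y.
  by rewrite mulr_gt0 // lt0r ?x_neq0 ?y_neq0 enorm_ge0.
(* the squared norm of |y| x - |x| y is 2 |x| |y| (|x| |y| - dot x y) *)
have := sqr_ge0 (enorm (enorm y *: x - enorm x *: y)).
rewrite enorm_sqrZB; nra.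
Qed.

Lemma enorm_triangle x y : enorm (x + y) <= enorm x + enorm y.
Proof.
rewrite -ler_sqr ?nnegrE ?addr_ge0 ?enorm_ge0 // sqrrD enorm_sqrD.
by have := cauchy_schwarz x y; lra.
Qed.

Lemma dist_triangle x y z : enorm (x - z) <= enorm (x - y) + enorm (y - z).
Proof. by have := enorm_triangle (x - y) (y - z); rewrite addrA subrK. Qed.

Lemma extend_ray (n_gt0 : (0 < n)%N) x y a : 0 <= a ->
  exists2 z, enorm (z - y) = a & enorm (z - x) = enorm (y - x) + a.
Proof.
move=> a0.
suff [w w1 yxw] : exists2 w, enorm w = 1 & y - x = enorm (y - x) *: w.
  exists (y + a *: w); first by rewrite addrC addKr enormZ w1 mulr1 ger0_norm.
  rewrite addrAC {1}yxw -scalerDl enormZ w1 mulr1 ger0_norm //.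
  by rewrite addr_ge0 ?enorm_ge0.
have [yx0 | yx_neq0] := eqVneq (enorm (y - x)) 0.
  exists (delta_mx 0 (Ordinal n_gt0)); last by rewrite yx0 scale0r (enorm_eq0 yx0).
  rewrite /enorm (bigD1 (Ordinal n_gt0)) //= big1 ?addr0 ?mxE ?eqxx ?expr1n ?sqrtr1 //.
  by move=> j /negbTE jn; rewrite mxE jn andbF expr0n.
exists ((enorm (y - x))^-1 *: (y - x)); last by rewrite scalerA divff ?scale1r.
by rewrite enormZ ger0_norm ?invr_ge0 ?enorm_ge0 // mulVf.
Qed.

Lemma euler_quadrilateral x1 x2 y1 y2 :
  enorm (x1 - x2) ^+ 2 + enorm (y1 - y2) ^+ 2 + enorm (x1 + x2 - y1 - y2) ^+ 2 =
  enorm (x1 - y1) ^+ 2 + enorm (x1 - y2) ^+ 2 +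
  enorm (x2 - y1) ^+ 2 + enorm (x2 - y2) ^+ 2.
Proof.
by rewrite !enorm_sqr /dot -!big_split /=; apply: eq_bigr => i _; rewrite !mxE; ring.
Qed.

Lemma diagonals_sqr_le4 x1 x2 y1 y2 :
  enorm (x1 - y1) <= 1 -> enorm (x1 - y2) <= 1 ->
  enorm (x2 - y1) <= 1 -> enorm (x2 - y2) <= 1 ->
  enorm (x1 - x2) ^+ 2 + enorm (y1 - y2) ^+ 2 <= 4.
Proof.
move=> /(exprn_ile1 2 (enorm_ge0 _)) h11 /(exprn_ile1 2 (enorm_ge0 _)) h12.
move=> /(exprn_ile1 2 (enorm_ge0 _)) h21 /(exprn_ile1 2 (enorm_ge0 _)) h22.
have := euler_quadrilateral x1 x2 y1 y2.
have := sqr_ge0 (enorm (x1 + x2 - y1 - y2)); lra.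
Qed.

End Euclidean.

Section Diameter.
Variables (R : realType) (n : nat).
Implicit Types (A : set 'rV[R]_n) (c : R).

Lemma diam_ge A c x y : (forall x y, A x -> A y -> enorm (x - y) <= c) ->
  A x -> A y -> enorm (x - y) <= diam A.
Proof.
move=> Ac Ax Ay; apply: sup_upper_bound; last by exists x, y.
split; first by exists (enorm (x - y)), x, y.
by exists c => _ [x' [y' [Ax' [Ay' ->]]]]; apply: Ac.
Qed.

Lemma diam_le A c x0 : A x0 -> (forall x y, A x -> A y -> enorm (x - y) <= c) ->
  diam A <= c.
Proof.
move=> Ax0 Ac; apply: ge_sup; first by exists (enorm (x0 - x0)), x0, x0.
by move=> _ [x [y [Ax [Ay ->]]]]; apply: Ac.
Qed.

Lemma diam_ge0 A c x0 : (forall x y, A x -> A y -> enorm (x - y) <= c) ->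
  A x0 -> 0 <= diam A.
Proof. by move=> Ac Ax0; rewrite -(enorm0 R n) -(subrr x0); apply: diam_ge Ac _ _. Qed.

Lemma diam_sqr_le A c x0 : A x0 -> 0 <= c ->
  (forall x y, A x -> A y -> enorm (x - y) ^+ 2 <= c) -> diam A ^+ 2 <= c.
Proof.
move=> Ax0 c0 Ac; have Ac' x y : A x -> A y -> enorm (x - y) <= Num.sqrt c.
  by move=> Ax Ay; rewrite ler_sqrtr ?enorm_ge0 ?Ac.
by rewrite -ler_sqrtr ?(diam_ge0 Ac' Ax0) ?(diam_le Ax0 Ac').
Qed.

End Diameter.

Lemma rV_dim_gt0 (R : realType) n (K : set 'rV[R]_n) :
  K !=set0 -> K <> setT -> (0 < n)%N.
Proof.
case: n K => // K [x Kx] []; apply/seteqP; split => // y _.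
by rewrite (thinmx0 y) -(thinmx0 x).
Qed.

Section BallComplement.
Variables (R : realType) (n : nat).
Implicit Types (A B K : set 'rV[R]_n) (x y : 'rV[R]_n) (r : R).

Lemma bcompP A y : bcomp A y <-> forall x, A x -> enorm (y - x) <= 1.
Proof. by []. Qed.

Lemma bcomp_dist_le1 A x y : A x -> bcomp A y -> enorm (x - y) <= 1.
Proof. by move=> Ax /bcompP Ay; rewrite distC; apply: Ay. Qed.

Lemma sub_bcomp2 A : A `<=` bcomp (bcomp A).
Proof. by move=> x Ax; apply/bcompP => y /(bcomp_dist_le1 Ax). Qed.

Lemma bcompS A B : A `<=` B -> bcomp B `<=` bcomp A.
Proof. by move=> AB y /bcompP By; apply/bcompP => x /AB /By. Qed.

Lemma bcompK K : in_Sn K -> bcomp (bcomp K) = K.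
Proof.
case=> A ->; apply/seteqP; split; last exact: sub_bcomp2.
exact/bcompS/sub_bcomp2.
Qed.

Lemma bcomp_neq0 K : in_Sn K -> K <> setT -> bcomp K !=set0.
Proof.
move=> SK KT; apply/set0P/eqP => K'0; apply: KT.
by rewrite -(bcompK SK) K'0 /bcomp bigcap_set0.
Qed.

Lemma cball_sub_bcomp A y r : (forall x, A x -> enorm (y - x) <= 1 - r) ->
  cball y r `<=` bcomp A.
Proof.
move=> yA z; rewrite /cball /= => zy; apply/bcompP => x Ax.
by have := yA x Ax; have := dist_triangle z y x; lra.
Qed.

Lemma bcomp_dist_le2 A x0 : A x0 ->
  forall y1 y2, bcomp A y1 -> bcomp A y2 -> enorm (y1 - y2) <= 2.
Proof.
move=> Ax0 y1 y2 Ay1 Ay2; apply: le_trans (dist_triangle y1 x0 y2) _.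
rewrite distC; have := bcomp_dist_le1 Ax0 Ay1; have := bcomp_dist_le1 Ax0 Ay2; lra.
Qed.

Lemma dist_le2 A y0 : bcomp A y0 ->
  forall x1 x2, A x1 -> A x2 -> enorm (x1 - x2) <= 2.
Proof.
move=> Ay0 x1 x2 /sub_bcomp2 Ax1 /sub_bcomp2 Ax2.
exact: bcomp_dist_le2 Ay0 _ _ Ax1 Ax2.
Qed.

End BallComplement.

Section DiameterBounds.
Variables (R : realType) (n : nat).
Implicit Types (A K : set 'rV[R]_n).

Lemma diam_sqr_add_le4 A : A !=set0 -> bcomp A !=set0 ->
  diam A ^+ 2 + diam (bcomp A) ^+ 2 <= 4.
Proof.
move=> [x0 Ax0] [y0 Ay0].
have diagonals x1 x2 y1 y2 : A x1 -> A x2 -> bcomp A y1 -> bcomp A y2 ->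
    enorm (x1 - x2) ^+ 2 + enorm (y1 - y2) ^+ 2 <= 4.
  by move=> *; apply: diagonals_sqr_le4; apply: (bcomp_dist_le1 (A := A)).
have diamA y1 y2 : bcomp A y1 -> bcomp A y2 ->
    diam A ^+ 2 <= 4 - enorm (y1 - y2) ^+ 2.
  move=> Ay1 Ay2; apply: (diam_sqr_le Ax0) => [|x1 x2 Ax1 Ax2].
    by have := diagonals _ _ _ _ Ax0 Ax0 Ay1 Ay2; have := sqr_ge0 (enorm (x0 - x0)); lra.
  by have := diagonals _ _ _ _ Ax1 Ax2 Ay1 Ay2; lra.
suff : diam (bcomp A) ^+ 2 <= 4 - diam A ^+ 2 by lra.
apply: (diam_sqr_le Ay0) => [|y1 y2 Ay1 Ay2].
  by have := diamA _ _ Ay0 Ay0; have := sqr_ge0 (enorm (y0 - y0)); lra.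
by have := diamA _ _ Ay1 Ay2; lra.
Qed.

Lemma sup_cross_dist A : (0 < n)%N -> A !=set0 -> bcomp A !=set0 ->
  sup [set enorm (y - x) | x in A & y in bcomp A] = 1.
Proof.
move=> n_gt0 [x0 Ax0] [y0 Ay0]; set T := [set _ | x in A & y in _].
have T0 : T !=set0 by exists (enorm (y0 - x0)); exists x0 => //; exists y0.
have T_le1 : ubound T 1.
  by move=> _ [x Ax [y Ay <-]]; rewrite distC; exact: (bcomp_dist_le1 Ax).
have T_sup : has_sup T by split; last exists 1.
have supT_le1 : sup T <= 1 := ge_sup T0 T_le1.
suff : sup T <= 2 * sup T - 1 by lra.
apply: (ge_sup T0) => _ [x Ax [y Ay <-]].
have [|z zy zx] := extend_ray n_gt0 x y (a := 1 - sup T); first by lra.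
have Az : bcomp A z.
  apply: (cball_sub_bcomp (y := y) (r := 1 - sup T)); last by rewrite /cball /= zy.
  move=> x' Ax'; rewrite subKr.
  by apply: sup_upper_bound T_sup _ _; exists x' => //; exists y.
have : enorm (z - x) <= sup T.
  by apply: sup_upper_bound T_sup _ _; exists x => //; exists z.
by rewrite zx; lra.
Qed.

Lemma diam_bcomp_ge A : (0 < n)%N -> A !=set0 -> bcomp A !=set0 ->
  diam A <= 1 -> 2 - diam A <= diam (bcomp A).
Proof.
move=> n_gt0 A0 A'0 diamA_le1.
have [[x0 Ax0] [y0 Ay0]] := (A0, A'0).
suff : sup [set enorm (y - x) | x in A & y in bcomp A] <=
       diam (bcomp A) - (1 - diam A) by rewrite sup_cross_dist //; lra.
apply: ge_sup.
  by exists (enorm (y0 - x0)); exists x0 => //; exists y0.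
move=> _ [x Ax [y Ay <-]].
have [|z zx zy] := extend_ray n_gt0 y x (a := 1 - diam A); first by lra.
have Az : bcomp A z.
  apply: (cball_sub_bcomp (y := x) (r := 1 - diam A)); last by rewrite /cball /= zx.
  by move=> x' Ax'; rewrite subKr; apply: diam_ge (dist_le2 Ay0) Ax Ax'.
have := diam_ge (bcomp_dist_le2 Ax0) Az Ay; rewrite zy distC; lra.
Qed.

Lemma diam_add_bcomp_ge2 K : (0 < n)%N -> in_Sn K -> K !=set0 -> bcomp K !=set0 ->
  2 <= diam K + diam (bcomp K).
Proof.
move=> n_gt0 SK K0 K'0.
have [/(diam_bcomp_ge n_gt0 K0 K'0)|diamK_gt1] := leP (diam K) 1; first by lra.
have [|] := leP (diam (bcomp K)) 1; last by lra.
have K''0 : bcomp (bcomp K) !=set0 by rewrite bcompK.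
by move/(diam_bcomp_ge n_gt0 K'0 K''0); rewrite bcompK //; lra.
Qed.

End DiameterBounds.

Theorem theorem3p8 (R : realType) (n : nat) (K : set 'rV[R]_n) :
  in_Sn K -> K <> set0 -> K <> setT ->
  [/\ 2 <= diam K + diam (bcomp K),
      diam K + diam (bcomp K) <= 2 * Num.sqrt 2 &
      forall d : R, diam K = d ->
        2 - d <= diam (bcomp K) /\ diam (bcomp K) <= Num.sqrt (4 - d ^+ 2)].
Proof.
move=> SK /eqP/set0P K0 KT; have K'0 := bcomp_neq0 SK KT.
have n_gt0 := rV_dim_gt0 K0 KT.
have [[x0 Kx0] [y0 K'y0]] := (K0, K'0).
have diamK0 := diam_ge0 (dist_le2 K'y0) Kx0.
have diamK'0 := diam_ge0 (bcomp_dist_le2 Kx0) K'y0.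
have sqr_le4 := diam_sqr_add_le4 K0 K'0.
have lower := diam_add_bcomp_ge2 n_gt0 SK K0 K'0.
split=> [//||d <-].
- rewrite -ler_sqr ?nnegrE ?addr_ge0 ?mulr_ge0 ?sqrtr_ge0 // exprMn sqr_sqrtr //.
  by have := sqr_ge0 (diam K - diam (bcomp K)); rewrite sqrrB sqrrD; lra.
- have := sqr_ge0 (diam (bcomp K)); split; [lra | rewrite ler_sqrtr //; lra].
Qed.
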